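(* Consider the cone percolation process on $\mathbb{T}_d^+$ ($d\ge2$) with radius of influence distributed as $R$. Let $\rho$ be the smallest non-negative root of $\mathbb{E}(\rho^{d^R}) + (1-\rho)p_0 = \rho$, and let $\psi$ be the smallest non-negative root of $\mathbb{E}\big(\psi^{\frac{d}{d-1}(d^R-1)}\big) = \psi$. Then $$1-\rho \le \mathbb{P}_+[V] \le 1-\psi.$$
   Context: Let $d\ge 2$ and let $\mathbb{T}_d$ be the infinite tree in which every vertex has exactly $d+1$ neighbours. Fix a vertex $\mathcal{O}$ (the origin); $d(u,v)$ denotes graph distance. Write $u\le v$ if $u$ lies on the path from $\mathcal{O}$ to $v$ (so $\mathcal{O}\le v$ for all $v$). Fix a neighbour $w$ of $\mathcal{O}$ and let $\mathbb{T}_d^+$ be the subtree obtained by deleting all vertices $x$ with $w\le x$; in $\mathbb{T}_d^+$ every vertex $u$ has exactly $d$ neighbours $x$ with $u\le x$ (its children). Let $R$ be a random variable with values in $\{0,1,2,\dots\}$, $p_k=\mathbb{P}(R=k)$, and assume $p_0\in(0,1)$. Cone percolation on $G\in\{\mathbb{T}_d,\mathbb{T}_d^+\}$: to each vertex $u$ of $G$ attach an independent copy $R_u$ of $R$; let $B_u=\{v\in G: u\le v,\ d(u,v)\le R_u\}$; set $I_0=\{\mathcal{O}\}$, $I_{n+1}=\bigcup_{u\in I_n}B_u$ for $n\ge0$, $I=\bigcup_{n\ge0}I_n$, and let $V$ be the event $\{|I|=\infty\}$ (survival). $\mathbb{P}_+$ and $\mathbb{P}$ denote the probability measures of the process on $\mathbb{T}_d^+$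 and on $\mathbb{T}_d$ respectively. Convention: $x^0=1$ for all $x\ge0$. *)

From HB Require Import structures.
From mathcomp Require Import all_boot all_order all_algebra.
From mathcomp Require Import all_classical all_reals all_analysis.
Set Implicit Arguments. Unset Strict Implicit. Unset Printing Implicit Defensive.
Import Order.TTheory GRing.Theory Num.Theory.
Local Open Scope classical_set_scope.
Local Open Scope ring_scope.

(* Vertices of T_d^+ (the rooted tree where every vertex has d children):
   finite words over 'I_d; the origin O is the empty word [::]. *)
Definition vertex (d : nat) := seq 'I_d.

(* u <= v : u lies on the path from O to v, i.e. u is a prefix of v. *)
Definition vle {d} (u v : vertex d) : bool := prefix u v.

(* graph distance d(u,v) when u <= v *)
Definition vdist {d} (u v : vertex d) : nat := (size v - size u)%N.

Definition cone {d} (Rad : vertex d -> nat) (u : vertex d) : set (vertex d) :=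
  [set v | vle u v /\ (vdist u v <= Rad u)%N].

Fixpoint infected {d} (Rad : vertex d -> nat) (n : nat) : set (vertex d) :=
  match n with
  | O => [set [::]]
  | n'.+1 => \bigcup_(u in infected Rad n') cone Rad u
  end.

Definition infected_all {d} (Rad : vertex d -> nat) : set (vertex d) :=
  \bigcup_(n in [set: nat]) infected Rad n.

Definition survival {d} {T : Type} (Rad : vertex d -> T -> nat) : set T :=
  [set w | ~ finite_set (infected_all (fun u => Rad u w))].

(* The family (X_i)_{i in I} of nat-valued random variables is i.i.d. with
   law p (p k = P(X_i = k)): all events {X_i = k} are measurable, and for every
   finite family of distinct indices the joint law is the product law. *)
Definition iid_law {dm : measure_display} {T : measurableType dm} {R : realType}
  (P : probability T R) (I : eqType) (X : I -> T -> nat) (p : nat -> R) : Prop :=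
  (forall i k, measurable [set w | X i w = k]) /\
  (forall (s : seq I) (k : I -> nat), uniq s ->
     P (\bigcap_(i in [set` s]) [set w | X i w = k i]) =
     (\prod_(i <- s) p (k i))%:E).

Definition smallest_nonneg_root {R : realType} (f : R -> \bar R) (x : R) : Prop :=
  0 <= x /\ f x = x%:E /\ (forall y, 0 <= y -> f y = y%:E -> x <= y).

Definition rho_map {R : realType} (d : nat) (p : nat -> R) (x : R) : \bar R :=
  ((\sum_(0 <= k <oo) (p k * x ^+ (d ^ k)%N)%:E) + ((1 - x) * p 0%N)%:E)%E.

Definition psi_map {R : realType} (d : nat) (p : nat -> R) (x : R) : \bar R :=
  (\sum_(0 <= k <oo) (p k * x `^ ((d%:R / (d%:R - 1)) * (d%:R ^+ k - 1)))%:E)%E.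

From HB Require Import structures.
From mathcomp Require Import all_boot all_order all_algebra.
From mathcomp Require Import all_classical all_reals all_analysis.
From mathcomp Require Import zify ring.
Import Order.TTheory GRing.Theory Num.Theory.
Import numFieldNormedType.Exports.

Set Implicit Arguments. Unset Strict Implicit. Unset Printing Implicit Defensive.

(* The event that the infection dies out within [n] generations is a finite
   union of disjoint cylinder events, so its probability is a polynomial
   [dying_weight n 0] in the [p k], given by a recursion over the first
   generation; it increases to the extinction probability [eta = 1 - P(V)].
   Comparing the recursion with the two generating functions gives both bounds.
   By induction [dying_weight n b <= rho ^ (d ^ b)], whence [eta <= rho].
   Conversely, a vertex of radius [r] dies as soon as each of the
   [d + d^2 + ... + d^r] vertices of its cone starts an independent copy of the
   process that dies, so [psi_map eta <= eta]; Tarski's fixed point theorem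
   then yields a root of [psi_map] in [[0, eta]], hence [psi <= eta]. *)

Notation config d := (seq (vertex d * nat)).

Section Configurations.
Variable d : nat.
Implicit Types (f : vertex d -> nat) (u : vertex d) (c : config d).

Definition agree f c : bool := all (fun x => f x.1 == x.2) c.

Definition prod_configs (L : 'I_d -> seq (config d)) (s : seq 'I_d) : seq (config d) :=
  foldr (fun i acc => [seq x ++ y | x <- L i, y <- acc]) [:: [::]] s.

(* [dies_within f n u b]: when [u] is infected and its infected ancestors still
   reach [b] generations below [u], no descendant of [u] at depth [n] or more is
   ever infected. *)
Fixpoint dies_within f n u b : bool :=
  match n with
  | 0 => false
  | n'.+1 => let s := maxn (f u) b in
      (s == 0) || (s <= n') && all (fun i => dies_within f n' (rcons u i) s.-1) (enum 'I_d)
  end.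

(* Disjoint cylinders whose union is the event [dies_within _ n u b]; each
   configuration fixes the radii on the finite part of the subtree below [u]
   that decides it. *)
Fixpoint dying_configs n u b : seq (config d) :=
  match n with
  | 0 => [::]
  | n'.+1 => flatten [seq let s := maxn r b in
      if s == 0 then [:: [:: (u, r)]]
      else if s <= n' then
        [seq (u, r) :: c
          | c <- prod_configs (fun i => dying_configs n' (rcons u i) s.-1) (enum 'I_d)]
      else [::] | r <- iota 0 n'.+1]
  end.

Lemma agree_cat f c c' : agree f (c ++ c') = agree f c && agree f c'.
Proof. exact: all_cat. Qed.

Lemma count_cat_configs f (s t : seq (config d)) :
  count (agree f) [seq x ++ y | x <- s, y <- t] = count (agree f) s * count (agree f) t.
Proof.
elim: s => //= x s IH; rewrite count_cat IH count_map mulnDl.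
under eq_count do rewrite /preim /= agree_cat.
by case: (agree f x); rewrite ?count_pred0 // mul1n.
Qed.

Lemma count_prod_configs f L s :
  count (agree f) (prod_configs L s) = \prod_(i <- s) count (agree f) (L i).
Proof. by elim: s => [|i s IH]; rewrite ?big_nil ?big_cons //= count_cat_configs IH. Qed.

Lemma prod_nat_of_bool (I : Type) (P : pred I) (s : seq I) :
  \prod_(i <- s) (P i : nat) = all P s.
Proof.
by elim: s => [|i s IH]; rewrite ?big_nil ?big_cons //= IH; case: (P i); rewrite ?mul1n.
Qed.

Lemma dies_withinS f n u b : dies_within f n.+1 u b =
  (f u <= n) && let s := maxn (f u) b in
  (s == 0) || (s <= n) && all (fun i => dies_within f n (rcons u i) s.-1) (enum 'I_d).
Proof.
rewrite /=; case: (leqP (f u) n) => //= ltn.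
have lt_max : n < maxn (f u) b := leq_trans ltn (leq_maxl _ _).
by rewrite (gtn_eqF (leq_ltn_trans (leq0n n) lt_max)) leqNgt lt_max.
Qed.

Lemma count_dying_configs f n u b : count (agree f) (dying_configs n u b) = dies_within f n u b.
Proof.
elim: n u b => // n IH u b.
set T := fun r => let s := maxn r b in
  (s == 0) || (s <= n) && all (fun i => dies_within f n (rcons u i) s.-1) (enum 'I_d).
rewrite /dying_configs -/dying_configs count_flatten -map_comp.
have branch r : count (agree f) (let s := maxn r b in if s == 0 then [:: [:: (u, r)]]
    else if s <= n then [seq (u, r) :: c | c <- prod_configs
      (fun i => dying_configs n (rcons u i) s.-1) (enum 'I_d)] else [::])
    = (f u == r) * T (f u).
  rewrite /T; case: (f u =P r) => [<-|ne].
    rewrite mul1n; case: ifP => _ /=; first by rewrite eqxx.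
    case: ifP => //= _; rewrite count_map.
    under eq_count do rewrite /preim /= eqxx.
    by rewrite count_prod_configs; under eq_bigr do rewrite IH; rewrite prod_nat_of_bool.
  rewrite mul0n; case: ifP => _; first by rewrite /= (introF eqP ne).
  case: ifP => _ //; rewrite count_map (eq_count (a2 := pred0)) ?count_pred0 // => c.
  by rewrite /preim /= (introF eqP ne).
rewrite (eq_map branch) (eq_map (fun r => mulnb _ _)) sumn_count.
have count_mem_and (B : bool) : count (fun r => (f u == r) && B) (iota 0 n.+1) = (f u <= n) && B.
  case: B; last by under eq_count do rewrite andbF; rewrite count_pred0 andbF.
  under eq_count do rewrite andbT eq_sym.
  by rewrite count_uniq_mem ?iota_uniq // mem_iota ltnS andbT.
by rewrite dies_withinS; apply: count_mem_and.
Qed.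

Lemma has_dying_configs f n u b : has (agree f) (dying_configs n u b) = dies_within f n u b.
Proof. by rewrite has_count count_dying_configs lt0b. Qed.

Lemma prefix_rcons_inj u v i j : prefix (rcons u i) v -> prefix (rcons u j) v -> i = j.
Proof. by rewrite !prefixE !size_rcons => /eqP -> /eqP /rcons_inj []. Qed.

Definition config_below u c : bool := uniq (map fst c) && all (fun x => prefix u x.1) c.

Lemma prod_configs_below u L s c : uniq s ->
  (forall i c, c \in L i -> config_below (rcons u i) c) -> c \in prod_configs L s ->
  uniq (map fst c) && all (fun x => has (fun i => prefix (rcons u i) x.1) s) c.
Proof.
move=> + L_below; elim: s c => [|i s IH] c /=; first by rewrite inE => _ /eqP ->.
move=> /andP [i_s uniq_s] /allpairsP [[x y] [/= xL yL ->]].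
have /andP [ux px] := L_below _ _ xL.
have /andP [uy py] := IH _ uniq_s yL.
rewrite map_cat cat_uniq ux uy all_cat /=; apply/and3P; split.
- rewrite andbT; apply/hasPn => v /mapP [z zy ->]; apply/negP => /mapP [z' zx' E].
  have /hasP [j js pj] := allP py _ zy.
  have pi := allP px _ zx'; rewrite -E in pi.
  by move: i_s; rewrite (prefix_rcons_inj pi pj) js.
- by apply/allP => z zx; rewrite (allP px _ zx).
- apply/allP => z zy; have /hasP [j js pj] := allP py _ zy.
  by apply/orP; right; apply/hasP; exists j.
Qed.

Lemma dying_configs_below n u b c : c \in dying_configs n u b -> config_below u c.
Proof.
elim: n u b c => // n IH u b c; rewrite /dying_configs -/dying_configs => /flatten_mapP [r _].
case: ifP => _; first by rewrite inE => /eqP -> /=; rewrite /config_below /= prefix_refl.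
case: ifP => // _ /mapP [c' c'in ->].
have /andP [uniq_c' below_c'] :=
  prod_configs_below (enum_uniq _) (fun i c => @IH (rcons u i) _ c) c'in.
rewrite /config_below /= uniq_c' prefix_refl /= andbT; apply/andP; split.
  apply/negP => /mapP [z zc E].
  have /hasP [j _ pj] := allP below_c' _ zc.
  by move: (size_prefix pj); rewrite size_rcons -E ltnn.
apply/allP => z zc; have /hasP [j _ pj] := allP below_c' _ zc.
exact: prefix_trans (prefix_rcons u j) pj.
Qed.

End Configurations.

Section Weights.
Local Open Scope ring_scope.
Variable R : comPzSemiRingType.
Variables (d : nat) (p : nat -> R).

Definition config_weight (c : config d) : R := \prod_(x <- c) p x.2.

(* The probability of [dies_within _ n u b], split according to the radius [r]
   of [u]; then [u]'s [d] children independently carry range [s.-1]. *)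
Fixpoint dying_weight (n b : nat) : R :=
  match n with
  | 0 => 0
  | n'.+1 => \sum_(r <- iota 0 n'.+1) p r *
     (let s := maxn r b in
      if s == 0%N then 1 else if (s <= n')%N then dying_weight n' s.-1 ^+ d else 0)
  end.

Lemma sum_cat_configs (s t : seq (config d)) :
  \sum_(c <- [seq x ++ y | x <- s, y <- t]) config_weight c =
  (\sum_(c <- s) config_weight c) * (\sum_(c <- t) config_weight c).
Proof.
rewrite big_allpairs_dep mulr_suml; apply: eq_bigr => x _; rewrite mulr_sumr.
by apply: eq_bigr => y _; rewrite /config_weight big_cat.
Qed.

Lemma sum_prod_configs L s :
  \sum_(c <- prod_configs L s) config_weight c = \prod_(i <- s) \sum_(c <- L i) config_weight c.
Proof.
elim: s => [|i s IH]; first by rewrite big_nil /= big_cons big_nil addr0 /config_weight big_nil.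
by rewrite big_cons /= sum_cat_configs IH.
Qed.

Lemma sum_dying_configs n u b : \sum_(c <- dying_configs n u b) config_weight c = dying_weight n b.
Proof.
elim: n u b => [|n IH] u b; first by rewrite big_nil.
rewrite /dying_configs -/dying_configs big_flatten big_map /=; apply: eq_bigr => r _.
case: ifP => _; first by rewrite big_cons big_nil addr0 /config_weight big_cons big_nil mulr1.
case: ifP => _; last by rewrite big_nil mulr0.
rewrite big_map; under eq_bigr do rewrite /config_weight big_cons -/(config_weight _).
rewrite -mulr_sumr sum_prod_configs; congr (_ * _).
under eq_bigr do rewrite IH.
by rewrite big_enum prodr_const card_ord.
Qed.

End Weights.

Section Reach.
Local Open Scope classical_set_scope.
Variable d : nat.
Implicit Types (f : vertex d -> nat) (u v x t : vertex d).

(* [Some k] : the vertex is infected and the infection spreads [k] more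
   generations below it; [None] : the vertex is not infected. *)
Definition reach_step (m : option nat) (a : nat) : option nat :=
  if m is Some k.+1 then Some (maxn k a) else None.

Fixpoint reach_from f x (m : option nat) t : option nat :=
  if t is i :: t' then reach_from f (rcons x i) (reach_step m (f (rcons x i))) t' else m.

Definition reach f v := reach_from f [::] (Some (f [::])) v.

Lemma reach_from_cat f x m t1 t2 :
  reach_from f x m (t1 ++ t2) = reach_from f (x ++ t1) (reach_from f x m t1) t2.
Proof. by elim: t1 x m => [|i t1 IH] x m /=; rewrite ?cats0 // IH cat_rcons. Qed.

Lemma reach_from_None f x t : reach_from f x None t = None.
Proof. by elim: t x => //= i t IH x. Qed.

Lemma reach_from_rcons f x m t i :
  reach_from f x m (rcons t i) = reach_step (reach_from f x m t) (f (x ++ rcons t i)).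
Proof. by rewrite -cats1 reach_from_cat /= cats1 -rcons_cat. Qed.

Lemma reach_from_size f t : forall x k, size t <= k ->
  exists2 k', reach_from f x (Some k) t = Some k' & k - size t <= k'.
Proof.
elim: t => [|i t IH] x k /= t_k; first by exists k; rewrite ?subn0.
case: k t_k => // k; rewrite ltnS => t_k.
have [k' -> le_k'] := IH (rcons x i) (maxn k (f (rcons x i))) (leq_trans t_k (leq_maxl k _)).
by exists k'; rewrite // subSS (leq_trans _ le_k') // leq_sub2r // leq_maxl.
Qed.

Lemma reach_ge f v m : reach f v = Some m -> f v <= m.
Proof.
elim/last_ind: v m => [|w i IH] m; first by move=> [<-].
rewrite /reach reach_from_rcons -/(reach f w) /=.
by case: (reach f w) => // -[|k] //= [<-]; apply: leq_maxr.
Qed.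

Lemma dies_withinP f (d_gt0 : 0 < d) n : forall u b,
  dies_within f n u b <->
  (forall t, reach_from f u (Some (maxn (f u) b)) t != None -> size t < n).
Proof.
elim: n => [|n IH] u b /=; first by split => // /(_ [::] isT).
set s := maxn (f u) b.
have -> : (forall t, reach_from f u (Some s) t != None -> size t < n.+1) <->
    (forall i t, reach_from f (rcons u i) (reach_step (Some s) (f (rcons u i))) t != None ->
      size t < n).
  by split=> [H i t /(H (i :: t))|H [|i t] //= /H].
case: (posnP s) => [-> | s_gt0] /=.
  by split => // _ i t; rewrite reach_from_None.
rewrite -(prednK s_gt0) /=; set k := s.-1.
split=> [/andP [_ /allP H] i t|H].
  by have := H i (mem_enum _ i); rewrite IH /= maxnC; apply.
have i0 : 'I_d := Ordinal d_gt0.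
apply/andP; split; last by apply/allP => i _; rewrite IH /= maxnC => t /H.
rewrite leqNgt; apply/negP => n_lt_s.
have size_le : size (nseq k i0) <= maxn k (f (rcons u i0)) by rewrite size_nseq leq_maxl.
have [k' reach_k' _] := reach_from_size f (rcons u i0) size_le.
by have := H i0 (nseq k i0); rewrite reach_k' size_nseq => /(_ isT); lia.
Qed.

Lemma infected_reach f v : infected_all f v -> reach f v != None.
Proof.
case=> n _; elim: n v => [|n IH] v /=; first by move=> ->.
case=> u /IH; case E: (reach f u) => [m|] // _ [/prefixP [t ->]].
rewrite /vdist size_cat addKn => t_le.
have [k' reach_k' _] := reach_from_size f u (leq_trans t_le (reach_ge E)).
by rewrite /reach reach_from_cat -/(reach f u) E reach_k'.
Qed.

Lemma reach_ancestor f v m : reach f v = Some m ->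
  exists x, [/\ infected_all f x, prefix x v & size v - size x + m <= f x].
Proof.
elim/last_ind: v m => [|w i IH] m.
  by move=> [<-]; exists [::]; split; [exists 0|exact: prefix0s|lia].
rewrite /reach reach_from_rcons -/(reach f w); case E: (reach f w) => [[|k]|] //= [<-].
have [x [[n _ x_inf] x_w le_x]] := IH _ E.
have x_wi : prefix x (rcons w i) := prefix_trans x_w (prefix_rcons w i).
have := size_prefix x_w; rewrite size_rcons => size_x.
case: (leqP (f (rcons w i)) k) => le_k.
  by exists x; split; [exists n|exact: x_wi|lia].
exists (rcons w i); split; [|exact: prefix_refl|rewrite size_rcons; lia].
by exists n.+1 => //; exists x => //; split; [exact: x_wi|rewrite /vdist size_rcons; lia].
Qed.

Lemma infected_allE f v : infected_all f v <-> reach f v != None.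
Proof.
split; first exact: infected_reach.
case E: (reach f v) => [m|] // _.
have [x [[n _ x_inf] x_v le_x]] := reach_ancestor E.
by exists n.+1 => //; exists x => //; split => //; rewrite /vdist; lia.
Qed.

Fixpoint words_upto n : seq (vertex d) :=
  if n is n'.+1 then [::] :: [seq i :: w | i <- enum 'I_d, w <- words_upto n'] else [:: [::]].

Lemma mem_words_upto n t : size t <= n -> t \in words_upto n.
Proof.
elim: n t => [|n IH] [|i t] //= t_le; rewrite in_cons; apply/orP; right.
by apply: allpairs_f; [rewrite mem_enum|exact: IH].
Qed.

Lemma finite_setP_size (A : set (vertex d)) :
  finite_set A <-> exists n, forall t, A t -> size t < n.
Proof.
split.
  move/finite_seqP => [s ->]; exists (\max_(x <- s) size x).+1 => t ts.
  by rewrite ltnS; apply: (leq_bigmax_seq (P := xpredT)).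
case=> n A_lt; apply: (@sub_finite_set _ _ [set` words_upto n]) => // t /A_lt t_lt.
exact/mem_words_upto/ltnW.
Qed.

Lemma dies_within_root f (d_gt0 : 0 < d) n :
  dies_within f n [::] 0 <-> (forall t, infected_all f t -> size t < n).
Proof.
rewrite dies_withinP // maxn0.
by split => H t; [rewrite infected_allE|rewrite -infected_allE]; apply: H.
Qed.

Lemma setC_survival (T : Type) (Rad : vertex d -> T -> nat) (d_gt0 : 0 < d) :
  ~` survival Rad = \bigcup_n [set w | dies_within (Rad^~ w) n [::] 0].
Proof.
apply/seteqP; split => w /=.
  by move=> /contrapT /finite_setP_size [n H]; exists n => //=; apply/dies_within_root.
case=> n _ /= /(dies_within_root _ d_gt0) H; apply; apply/finite_setP_size.
by exists n.
Qed.

Lemma dies_within_rootS f (d_gt0 : 0 < d) n :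
  dies_within f n [::] 0 -> dies_within f n.+1 [::] 0.
Proof. by rewrite !dies_within_root // => H t /H /ltnW. Qed.

End Reach.

Section Cylinders.
Local Open Scope classical_set_scope.
Local Open Scope ring_scope.
Context (R : realType) (dm : measure_display) (Omega : measurableType dm)
  (P : probability Omega R) (d : nat) (p : nat -> R) (Rad : vertex d -> Omega -> nat).
Hypothesis iidRad : iid_law P Rad p.

Definition cylinder (c : config d) : set Omega := [set w | agree (Rad^~ w) c].

Definition cylinders (L : seq (config d)) : set Omega := [set w | has (agree (Rad^~ w)) L].

Lemma cylinder_cons v r c : cylinder ((v, r) :: c) = [set w | Rad v w = r] `&` cylinder c.
Proof.
apply/seteqP; split => w; rewrite /cylinder /agree /=; first by case/andP => /eqP.
by case=> -> ->; rewrite eqxx.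
Qed.

Lemma measurable_cylinder c : measurable (cylinder c).
Proof.
elim: c => [|[v r] c IH].
  by rewrite (_ : cylinder [::] = setT); [exact: measurableT|apply/seteqP].
by rewrite cylinder_cons; apply: measurableI => //; apply: iidRad.1.
Qed.

Definition config_value (c : config d) v := nth 0%N (map snd c) (index v (map fst c)).

Lemma config_valueE c x : uniq (map fst c) -> x \in c -> config_value c x.1 = x.2.
Proof.
move=> uniq_c x_c; have j_lt : (index x c < size c)%N by rewrite index_mem.
have x_nth : nth x c (index x c) = x by rewrite nth_index.
have idx : index x.1 (map fst c) = index x c.
  have := @index_uniq _ x.1 (index x c) (map fst c); rewrite size_map (nth_map x) // x_nth.
  exact.
by rewrite /config_value idx (nth_map x) // x_nth.
Qed.

Lemma cylinder_prob c : uniq (map fst c) -> P (cylinder c) = (config_weight p c)%:E.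
Proof.
move=> uniq_c.
have -> : cylinder c = \bigcap_(v in [set` map fst c]) [set w | Rad v w = config_value c v].
  apply/seteqP; split => w.
    by move=> /allP agr v /= /mapP [x xc ->]; rewrite (config_valueE uniq_c xc); apply/eqP/agr.
  by move=> H; apply/allP => x xc; rewrite -(config_valueE uniq_c xc); apply/eqP/H/map_f.
rewrite (iidRad.2 _ _ uniq_c) big_map; congr EFin; apply: eq_big_seq => x xc.
by rewrite config_valueE.
Qed.

Lemma cylinders_cons c L : cylinders (c :: L) = cylinder c `|` cylinders L.
Proof. by apply/seteqP; split => w; rewrite /cylinders /cylinder /= => /orP. Qed.

Lemma measurable_cylinders L : measurable (cylinders L).
Proof.
elim: L => [|c L IH].
  by rewrite (_ : cylinders [::] = set0); [exact: measurable0|apply/seteqP; split => w].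
by rewrite cylinders_cons; apply: measurableU => //; apply: measurable_cylinder.
Qed.

Lemma cylinders_prob L : (forall c, c \in L -> uniq (map fst c)) ->
  (forall f, count (agree f) L <= 1)%N -> P (cylinders L) = (\sum_(c <- L) config_weight p c)%:E.
Proof.
elim: L => [|c L IH] uniq_L disj_L.
  by rewrite big_nil (_ : cylinders [::] = set0) ?measure0 //; apply/seteqP; split => w.
have disj_cL : cylinder c `&` cylinders L = set0.
  apply/seteqP; split => w //= [c_w L_w]; have := disj_L (Rad^~ w).
  by rewrite /= c_w add1n ltnS leqn0 => /eqP; apply/eqP; rewrite -lt0n -has_count.
rewrite cylinders_cons (measureU _ (measurable_cylinder c) (measurable_cylinders L) disj_cL).
rewrite big_cons EFinD -(cylinder_prob (uniq_L _ (mem_head _ _))) -IH //.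
  by move=> c' c'L; apply: uniq_L; rewrite in_cons c'L orbT.
by move=> f; apply: leq_trans (disj_L f); rewrite /= leq_addl.
Qed.

Lemma dies_within_cylinders n u b :
  [set w | dies_within (Rad^~ w) n u b] = cylinders (dying_configs n u b).
Proof. by apply/seteqP; split => w; rewrite /cylinders /= has_dying_configs. Qed.

Lemma measurable_dies_within n u b : measurable [set w | dies_within (Rad^~ w) n u b].
Proof. by rewrite dies_within_cylinders; apply: measurable_cylinders. Qed.

Lemma dies_within_prob n u b :
  P [set w | dies_within (Rad^~ w) n u b] = (dying_weight d p n b)%:E.
Proof.
rewrite dies_within_cylinders cylinders_prob ?sum_dying_configs //.
  by move=> c /dying_configs_below /andP [].
by move=> f; rewrite count_dying_configs leq_b1.
Qed.

Lemma iid_law_ge0 k : 0 <= p k.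
Proof.
have := iidRad.2 [:: [::]] (fun _ => k) isT; rewrite big_cons big_nil mulr1 => Pk.
by rewrite -lee_fin -Pk measure_ge0.
Qed.

Lemma iid_law_sum_le1 n : \sum_(r <- iota 0 n) p r <= 1.
Proof.
set L := [seq [:: ([::] : vertex d, r)] | r <- iota 0 n].
have disj_L f : (count (agree f) L <= 1)%N.
  rewrite count_map (eq_count (a2 := pred1 (f [::]))) => [|r]; last by rewrite /= /agree /= andbT.
  by rewrite count_uniq_mem ?iota_uniq ?leq_b1.
have uniq_L c : c \in L -> uniq (map fst c) by move=> /mapP [r _ ->].
have := cylinders_prob uniq_L disj_L; rewrite big_map.
under eq_bigr do rewrite /config_weight big_cons big_nil mulr1.
by move=> /= sumE; rewrite -lee_fin -sumE; apply/probability_le1/measurable_cylinders.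
Qed.

End Cylinders.

Section DyingWeightBounds.
Local Open Scope ring_scope.
Variables (R : realDomainType) (d : nat) (p : nat -> R).
Hypothesis d_gt0 : (0 < d)%N.
Hypothesis p_ge0 : forall k, 0 <= p k.
Hypothesis p_sum_le1 : forall n, \sum_(r <- iota 0 n) p r <= 1.
Local Notation w := (dying_weight d p).

Lemma dying_weight_ge0 n b : 0 <= w n b.
Proof.
elim: n b => // n IH b /=; apply: sumr_ge0 => r _; apply: mulr_ge0 => //=.
by case: ifP => // _; case: ifP => // _; apply: exprn_ge0.
Qed.

Lemma dying_weight_le1 n b : w n b <= 1.
Proof.
elim: n b => [|n IH] b /=; first exact: ler01.
apply: le_trans (p_sum_le1 n.+1); apply: ler_sum => r _; apply: ler_piMr => //=.
by case: ifP => _; rewrite ?lexx //; case: ifP => _; rewrite ?ler01 ?exprn_ile1 ?dying_weight_ge0.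
Qed.

Definition subtrees_weight m s := if (s <= m)%N then w m s.-1 ^+ d else 0.

Lemma dying_weightS n b : w n.+1 b =
  \sum_(r <- iota 0 n.+1) p r * (if maxn r b == 0%N then 1 else subtrees_weight n (maxn r b)).
Proof. by []. Qed.

Lemma subtrees_weight_ge0 m s : 0 <= subtrees_weight m s.
Proof. by rewrite /subtrees_weight; case: ifP => _ //; rewrite exprn_ge0 ?dying_weight_ge0. Qed.

Lemma subtrees_weight_le1 m s : subtrees_weight m s <= 1.
Proof.
rewrite /subtrees_weight; case: ifP => _ //.
by rewrite exprn_ile1 ?dying_weight_ge0 ?dying_weight_le1.
Qed.

Lemma dying_weight_le_pow x : 0 <= x <= 1 ->
  (forall N, \sum_(k <- iota 0 N) p k * x ^+ (d ^ k) + (1 - x) * p 0 <= x) ->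
  forall n b, w n b <= x ^+ (d ^ b).
Proof.
move=> /andP [x_ge0 x_le1] x_root; elim=> [|n IH] b; first exact: exprn_ge0.
have subtrees_le s : (0 < s)%N -> subtrees_weight n s <= x ^+ (d ^ s).
  rewrite /subtrees_weight => s_gt0; case: ifP => _; last exact: exprn_ge0.
  rewrite -(prednK s_gt0) expnSr exprM prednK //.
  by apply: lerXn2r; rewrite ?nnegrE ?exprn_ge0 ?dying_weight_ge0.
rewrite dying_weightS; case: b => [|b].
  rewrite big_cons maxn0 eqxx mulr1 expn0 expr1; apply: le_trans (x_root n.+1).
  rewrite -[iota 0 n.+1]/(0%N :: iota 1 n) big_cons expn0 expr1.
  rewrite (_ : p 0 * x + _ + _ = p 0 + \sum_(j <- iota 1 n) p j * x ^+ (d ^ j)); last first.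
    by rewrite mulrBl mul1r [p 0 * x]mulrC; set S := \sum_(_ <- _) _; ring.
  rewrite lerD2l [leLHS]big_seq [leRHS]big_seq; apply: ler_sum => r.
  rewrite mem_iota maxn0 => /andP [r_gt0 _].
  by rewrite gtn_eqF //; apply/ler_wpM2l/subtrees_le.
apply: le_trans (_ : \sum_(r <- iota 0 n.+1) p r * x ^+ (d ^ b.+1) <= _); last first.
  by rewrite -mulr_suml ler_piMl ?exprn_ge0.
apply: ler_sum => r _; have s_gt0 := leq_trans (ltn0Sn b) (leq_maxr r b.+1).
rewrite gtn_eqF //; apply/ler_wpM2l/(le_trans (subtrees_le _ s_gt0)) => //.
by apply: ler_wiXn2l => //; rewrite leq_pexp2l ?leq_maxr.
Qed.

Lemma dying_weight_mul_le m s : (0 < s)%N -> w m.+1 0 * subtrees_weight m s <= w m.+1 s.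
Proof.
move=> s_gt0; rewrite !dying_weightS mulr_suml; apply: ler_sum => r _.
rewrite -mulrA; apply: ler_wpM2l => //.
rewrite (gtn_eqF (leq_trans s_gt0 (leq_maxr r s))) maxn0.
case: (leqP r s) => [_|lt_sr].
  by rewrite ler_piMl ?subtrees_weight_ge0 //; case: eqP => _ //; apply: subtrees_weight_le1.
by rewrite gtn_eqF ?(leq_ltn_trans _ lt_sr) // ler_piMr ?subtrees_weight_ge0 ?subtrees_weight_le1.
Qed.

(* The infection with range [s] at [u] dies within [n] generations as soon as
   each of the [d ^ j] vertices at depth [j <= s] below [u] starts a fresh process
   (incoming range [0]) that dies within [n - j] generations. *)
Lemma dying_weight_prod_le s n : \prod_(j < s.+1) w (n - j) 0 ^+ (d ^ j) <= w n s.
Proof.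
elim: s n => [|s IH] n; first by rewrite big_ord_recl big_ord0 mulr1 subn0 expn0 expr1.
case: n => [|m]; first by rewrite big_ord_recl /= expn0 expr1 mul0r.
rewrite big_ord_recl subn0 expn0 expr1.
apply: le_trans (dying_weight_mul_le _ _) => //; apply: ler_wpM2l; first exact: dying_weight_ge0.
rewrite /subtrees_weight; case: ifP => le_sm /=.
  apply: le_trans (_ : (\prod_(j < s.+1) w (m - j) 0 ^+ (d ^ j)) ^+ d <= _); last first.
    apply: lerXn2r; rewrite ?nnegrE ?dying_weight_ge0 ?prodr_ge0 // => j _.
    by rewrite exprn_ge0 ?dying_weight_ge0.
  rewrite -prodrXl; apply: ler_prod => j _; rewrite exprn_ge0 ?dying_weight_ge0 //=.
  by rewrite /bump /= add1n subSS -exprM expnSr.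
rewrite (bigD1 (Ordinal (ltnSn s))) //= /bump /= add1n.
have -> : (m.+1 - s.+1 = 0)%N by apply/eqP; rewrite subn_eq0 leqNgt ltnS le_sm.
by rewrite /= expr0n expn_eq0 (negbTE (_ : d != 0%N)) ?mul0r // -lt0n.
Qed.

Lemma dying_weight_lower m : \sum_(r <- iota 0 m.+1) p r *
   (if r == 0%N then 1 else \prod_(j < r) w (m - j) 0 ^+ (d ^ j.+1)) <= w m.+1 0.
Proof.
rewrite dying_weightS [leLHS]big_seq [leRHS]big_seq; apply: ler_sum => r.
rewrite mem_iota add0n ltnS maxn0 => /andP [_ le_rm].
case: eqP => // /eqP r_neq0; apply: ler_wpM2l => //; rewrite /subtrees_weight le_rm.
apply: le_trans (_ : (\prod_(j < r) w (m - j) 0 ^+ (d ^ j)) ^+ d <= _).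
  rewrite -prodrXl; apply: ler_prod => j _.
  by rewrite exprn_ge0 ?dying_weight_ge0 //= -exprM expnSr.
have := dying_weight_prod_le r.-1 m; rewrite prednK ?lt0n // => prod_le.
apply: lerXn2r; rewrite ?nnegrE ?dying_weight_ge0 ?prodr_ge0 // => j _.
by rewrite exprn_ge0 ?dying_weight_ge0.
Qed.

End DyingWeightBounds.

Section PsiSeries.
Local Open Scope classical_set_scope.
Local Open Scope ring_scope.
Variables (R : realType) (d : nat) (p : nat -> R).
Hypothesis d_ge2 : (2 <= d)%N.
Hypothesis p_ge0 : forall k, 0 <= p k.

Definition psi_exponent k : nat := \sum_(j < k) d ^ j.+1.

Definition psi_poly M (x : R) : R := \sum_(k <- iota 0 M) p k * x ^+ psi_exponent k.

Lemma psi_exponentE k : (d%:R / (d%:R - 1)) * (d%:R ^+ k - 1) = (psi_exponent k)%:R :> R.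
Proof.
have d1_neq0 : d%:R - 1 != 0 :> R by rewrite subr_eq0 pnatr_eq1 gtn_eqF.
apply: (mulIf d1_neq0); rewrite mulrAC divfK //.
elim: k => [|k IH]; first by rewrite /psi_exponent big_ord0 expr0 subrr mulr0 mul0r.
rewrite /psi_exponent big_ord_recr /= -/(psi_exponent k) natrD mulrDl -IH natrX exprS.
ring.
Qed.

Lemma psi_termE k (x : R) : 0 <= x ->
  x `^ ((d%:R / (d%:R - 1)) * (d%:R ^+ k - 1)) = x ^+ psi_exponent k.
Proof. by move=> x_ge0; rewrite psi_exponentE powR_mulrn. Qed.

Lemma psi_map_partial (x : R) n : 0 <= x ->
  (\sum_(0 <= k < n) (p k * x `^ ((d%:R / (d%:R - 1)) * (d%:R ^+ k - 1)))%:E)%E =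
  (psi_poly n x)%:E.
Proof.
move=> x_ge0; rewrite sumEFin /psi_poly /index_iota subn0; congr EFin.
by apply: eq_bigr => k _; rewrite psi_termE.
Qed.

Lemma psi_map_le (x c : R) : 0 <= x -> (forall n, psi_poly n x <= c) -> (psi_map d p x <= c%:E)%E.
Proof.
move=> x_ge0 le_c; apply: lime_le.
  by apply: is_cvg_nneseries => n _ _; rewrite lee_fin mulr_ge0 ?powR_ge0.
by apply: nearW => n; rewrite psi_map_partial // lee_fin.
Qed.

Lemma psi_poly_le_map n (x : R) : 0 <= x -> ((psi_poly n x)%:E <= psi_map d p x)%E.
Proof.
move=> x_ge0; rewrite -psi_map_partial //; apply: nneseries_lim_ge => k _ _.
by rewrite lee_fin mulr_ge0 ?powR_ge0.
Qed.

Lemma psi_map_nondecreasing (x y : R) : 0 <= x -> x <= y -> (psi_map d p x <= psi_map d p y)%E.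
Proof.
move=> x_ge0 le_xy; apply: lee_nneseries => [k _ _|k _].
  by rewrite lee_fin mulr_ge0 ?powR_ge0.
rewrite !psi_termE ?(le_trans x_ge0) // lee_fin ler_wpM2l //.
by rewrite lerXn2r ?nnegrE ?(le_trans x_ge0).
Qed.

Lemma cvg_psi_poly M (u : R^nat) (x : R) :
  u @ \oo --> x -> (fun k => psi_poly M (u k)) @ \oo --> psi_poly M x.
Proof.
move=> ux; rewrite /psi_poly; elim: (iota 0 M) => [|r s IH].
  by under eq_fun do rewrite big_nil; rewrite big_nil; exact: cvg_cst.
under eq_fun do rewrite big_cons; rewrite big_cons; apply: cvgD => //.
apply: cvgM; first exact: cvg_cst.
exact: (continuous_cvg _ (@exprn_continuous R (psi_exponent r) x) ux).
Qed.

End PsiSeries.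

Section SmallestRoot.
Local Open Scope classical_set_scope.
Local Open Scope ring_scope.
Variable R : realType.

(* Tarski: [sup {x in [0, e] | x <= f x}] is a fixed point of [f] in [[0, e]]. *)
Lemma smallest_nonneg_root_le (f : R -> \bar R) (e r : R) : 0 <= e ->
  (forall x y, 0 <= x -> x <= y -> y <= e -> (f x <= f y)%E) ->
  (0 <= f 0%R)%E -> (f e <= e%:E)%E -> smallest_nonneg_root f r -> r <= e.
Proof.
move=> e_ge0 f_mono f0_ge0 fe_le [_ [_ r_min]].
set S := [set x | 0 <= x <= e /\ (x%:E <= f x)%E].
have S0 : S 0 by split; rewrite ?lexx.
have S_ub : has_ubound S by exists e => x [/andP [_]].
set s := sup S.
have le_s x : S x -> x <= s by move=> Sx; apply: ub_le_sup.
have s_ge0 : 0 <= s := le_s 0 S0.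
have s_le_e : s <= e by apply: ge_sup; [exists 0|move=> x [/andP []]].
have fs_ge0 : (0 <= f s)%E := le_trans f0_ge0 (f_mono _ _ (lexx 0) s_ge0 s_le_e).
have fs_le_e : (f s <= e%:E)%E := le_trans (f_mono _ _ s_ge0 s_le_e (lexx e)) fe_le.
have fsE : f s = (fine (f s))%:E by rewrite fineK // ge0_fin_numE // (le_lt_trans fs_le_e) ?ltry.
set g := fine (f s) in fsE.
have g_le_e : g <= e by rewrite -lee_fin -fsE.
have s_le_g : s <= g.
  apply: ge_sup; first by exists 0.
  move=> x [x_in x_le_fx]; have /andP [x_ge0 _] := x_in.
  by rewrite -lee_fin -fsE (le_trans x_le_fx) // f_mono // le_s.
have S_g : S g.
  split; first by rewrite g_le_e (le_trans s_ge0 s_le_g).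
  by rewrite -fsE f_mono.
have fs_s : f s = s%:E by rewrite fsE; congr EFin; apply/eqP; rewrite eq_le s_le_g le_s.
exact: le_trans (r_min s s_ge0 fs_s) s_le_e.
Qed.

End SmallestRoot.

Section ExtinctionBounds.
Local Open Scope classical_set_scope.
Local Open Scope ring_scope.
Variables (R : realType) (d : nat) (p : nat -> R) (eta : R).
Hypothesis d_ge2 : (2 <= d)%N.
Hypothesis p_ge0 : forall k, 0 <= p k.
Hypothesis p_sum_le1 : forall n, \sum_(r <- iota 0 n) p r <= 1.
Local Notation E n := (dying_weight d p n 0).
Hypothesis E_nondecreasing : nondecreasing_seq (fun n => E n).
Hypothesis E_cvg : (fun n => E n) @ \oo --> eta.

Let d_gt0 : (0 < d)%N. Proof. exact: ltnW. Qed.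

Lemma dying_weight_le_extinction n : E n <= eta.
Proof.
have E_cvgn : cvgn (fun n => E n) by apply/cvg_ex; exists eta.
by rewrite -(cvg_lim _ E_cvg) //; exact: nondecreasing_cvgn_le E_nondecreasing E_cvgn n.
Qed.

Lemma extinction_ge0 : 0 <= eta.
Proof. exact: le_trans (dying_weight_ge0 d p_ge0 0 0) (dying_weight_le_extinction 0). Qed.

Lemma extinction_le1 : eta <= 1.
Proof. by apply: (cvgr_to_le E_cvg); apply: nearW => n; apply: dying_weight_le1. Qed.

Lemma psi_poly_dying_weight_le M k : psi_poly d p M.+1 (E k) <= E (k + M).+1.
Proof.
apply: le_trans (dying_weight_lower d_gt0 p_ge0 p_sum_le1 _).
rewrite (_ : iota 0 (k + M).+1 = iota 0 M.+1 ++ iota M.+1 k); last first.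
  by rewrite -[M.+1]add0n -iotaD add0n addSn addnC.
rewrite big_cat /= -[leLHS]addr0 lerD //; last first.
  apply: sumr_ge0 => r _; apply: mulr_ge0 => //; case: eqP => // _.
  by apply: prodr_ge0 => j _; rewrite exprn_ge0 ?dying_weight_ge0.
rewrite /psi_poly [leLHS]big_seq [leRHS]big_seq; apply: ler_sum => r.
rewrite mem_iota add0n ltnS => /andP [_ le_rM]; apply: ler_wpM2l => //.
case: eqP => [->|_]; first by rewrite /psi_exponent big_ord0 expr0.
rewrite /psi_exponent -prodrXr; apply: ler_prod => j _; rewrite exprn_ge0 ?dying_weight_ge0 //=.
apply: lerXn2r; rewrite ?nnegrE ?dying_weight_ge0 //; apply: E_nondecreasing.
by rewrite -addnBA ?leq_addr // (leq_trans (ltnW (ltn_ord j))).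
Qed.

Lemma psi_poly_extinction_le M : psi_poly d p M eta <= eta.
Proof.
case: M => [|M]; first by rewrite /psi_poly big_nil extinction_ge0.
apply: (cvgr_to_le (cvg_psi_poly (M := M.+1) E_cvg)); apply: nearW => k.
exact: le_trans (psi_poly_dying_weight_le M k) (dying_weight_le_extinction _).
Qed.

Lemma psi_le_extinction psi : smallest_nonneg_root (psi_map d p) psi -> psi <= eta.
Proof.
apply: smallest_nonneg_root_le; first exact: extinction_ge0.
- by move=> x y x_ge0 le_xy _; apply: psi_map_nondecreasing.
- by have := psi_poly_le_map d_ge2 p_ge0 0 (lexx 0); rewrite /psi_poly big_nil.
- by apply: psi_map_le => //; [exact: extinction_ge0|exact: psi_poly_extinction_le].
Qed.

Lemma rho_map_partial_le x N : 0 <= x ->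
  ((\sum_(k <- iota 0 N) p k * x ^+ (d ^ k) + (1 - x) * p 0)%:E <= rho_map d p x)%E.
Proof.
move=> x_ge0; rewrite /rho_map EFinD leeD2r //.
have := @nneseries_lim_ge R (fun k => (p k * x ^+ (d ^ k))%:E) xpredT 0 N.
rewrite sumEFin /index_iota subn0; apply => k _ _.
by rewrite lee_fin mulr_ge0 ?exprn_ge0.
Qed.

Lemma extinction_le_rho rho : smallest_nonneg_root (rho_map d p) rho -> eta <= rho.
Proof.
move=> [rho_ge0 [rho_root _]].
case: (leP rho 1) => [rho_le1|lt1_rho]; last exact: le_trans extinction_le1 (ltW lt1_rho).
have rho_partial N : \sum_(k <- iota 0 N) p k * rho ^+ (d ^ k) + (1 - rho) * p 0 <= rho.
  by rewrite -lee_fin -rho_root rho_map_partial_le.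
apply: (cvgr_to_le E_cvg); apply: nearW => n.
have := dying_weight_le_pow d_gt0 p_ge0 p_sum_le1 _ rho_partial n 0.
by rewrite expn0 expr1 rho_ge0 rho_le1; apply.
Qed.

End ExtinctionBounds.

Section Survival.
Local Open Scope classical_set_scope.
Local Open Scope ring_scope.
Context (R : realType) (dm : measure_display) (Omega : measurableType dm)
  (P : probability Omega R) (d : nat) (p : nat -> R) (Rad : vertex d -> Omega -> nat).
Hypothesis iidRad : iid_law P Rad p.
Hypothesis d_gt0 : (0 < d)%N.

Let dies n := [set w | dies_within (Rad^~ w) n [::] 0].

Let dies_nondecreasing : nondecreasing_seq dies.
Proof. by apply/nondecreasing_seqP => n; apply/subsetPset => w; apply: dies_within_rootS. Qed.

Lemma dying_weight_nondecreasing : nondecreasing_seq (fun n => dying_weight d p n 0).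
Proof.
apply/nondecreasing_seqP => n; rewrite -lee_fin -!(dies_within_prob iidRad _ [::]).
apply: le_measure; rewrite ?inE; try exact: measurable_dies_within iidRad _ _ _.
by move=> w; apply: dies_within_rootS.
Qed.

Lemma survival_prob : exists2 eta : R,
  (fun n => dying_weight d p n 0) @ \oo --> eta & P (survival Rad) = (1 - eta)%:E.
Proof.
have m_dies n : measurable (dies n) by apply: measurable_dies_within iidRad _ _ _.
have m_extinct : measurable (\bigcup_n dies n) by apply: bigcupT_measurable.
set eta := fine (P (\bigcup_n dies n)).
have P_extinct : P (\bigcup_n dies n) = eta%:E.
  rewrite fineK // ge0_fin_numE ?measure_ge0 //.
  exact: le_lt_trans (probability_le1 _ m_extinct) (ltry _).
exists eta.
  have -> : (fun n => dying_weight d p n 0) = fine \o (fun n => P (dies n)).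
    by apply/funext => n /=; rewrite (dies_within_prob iidRad).
  apply: fine_cvg; rewrite -P_extinct.
  exact: nondecreasing_cvg_mu m_dies m_extinct dies_nondecreasing.
by rewrite -[survival Rad]setCK setC_survival // probability_setC // P_extinct.
Qed.

End Survival.

Unset Implicit Arguments. Set Strict Implicit. Set Printing Implicit Defensive.
Local Open Scope classical_set_scope.
Local Open Scope ring_scope.

Theorem theorem2 (R : realType) (dm : measure_display) (Omega : measurableType dm)
  (P : probability Omega R) (d : nat) (p : nat -> R)
  (Rad : vertex d -> Omega -> nat) (rho psi : R) :
  (2 <= d)%N ->
  iid_law P Rad p ->
  0 < p 0%N < 1 ->
  smallest_nonneg_root (rho_map d p) rho ->
  smallest_nonneg_root (psi_map d p) psi ->
  ((1 - rho)%:E <= P (survival Rad))%E /\ (P (survival Rad) <= (1 - psi)%:E)%E.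
Proof.
move=> d_ge2 iidRad _ rho_root psi_root.
have d_gt0 : (0 < d)%N by apply: ltnW.
have [eta E_cvg ->] := survival_prob iidRad d_gt0.
have p_ge0 := iid_law_ge0 iidRad.
have p_sum_le1 := iid_law_sum_le1 iidRad.
have E_nondecreasing := dying_weight_nondecreasing iidRad d_gt0.
rewrite !lee_fin !lerD2l !lerN2; split.
- exact: extinction_le_rho d_ge2 p_ge0 p_sum_le1 E_cvg _ rho_root.
- exact: psi_le_extinction d_ge2 p_ge0 p_sum_le1 E_nondecreasing E_cvg _ psi_root.
Qed.
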